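(* For every $0<a<2$, as $\theta\to\infty$, \[f'''(\theta)=O\big(e^{-a\theta}\big)\qquad\text{and}\qquad j''(\theta)=O\big(e^{-a\theta}\big).\]
   Context: Define $\lambda:[0,\infty)\to(0,1/4]$ by $\lambda(0)=1/4$ and, for $\theta>0$, $\lambda(\theta)$ is the unique $\lambda\in(0,1/4)$ with $-1+\frac{\operatorname{artanh}(\sqrt{1-4\lambda})}{\sqrt{1-4\lambda}}=\theta$. For $\theta>0$ set $f(\theta)=-\ln\lambda(\theta)-2\theta-\theta\ln\big(1-4\lambda(\theta)\big)$ and $j(\theta)=-\tfrac12\ln\big(1-4(\theta+1)\lambda(\theta)\big)+\tfrac12\ln 2$. *)

From Stdlib Require Import Reals Lra ClassicalEpsilon.
From Coquelicot Require Import Coquelicot.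
Open Scope R_scope.

Definition artanh (x : R) : R := / 2 * ln ((1 + x) / (1 - x)).

Definition theta_of_lambda (l : R) : R :=
  -1 + artanh (sqrt (1 - 4 * l)) / sqrt (1 - 4 * l).

(* lambda(0) = 1/4; for theta > 0, lambda(theta) is the unique l in (0,1/4)
   with theta_of_lambda l = theta (chosen by Hilbert's epsilon; existence and
   uniqueness are part of the paper's definition). For theta < 0 (outside the
   paper's domain) we arbitrarily set 1/4. *)
Definition lambda (t : R) : R :=
  match Rle_dec t 0 with
  | left _ => / 4
  | right _ =>
      epsilon (inhabits 0) (fun l => 0 < l < / 4 /\ theta_of_lambda l = t)
  end.

Definition f_fun (t : R) : R :=
  - ln (lambda t) - 2 * t - t * ln (1 - 4 * lambda t).

Definition j_fun (t : R) : R :=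
  - / 2 * ln (1 - 4 * (t + 1) * lambda t) + / 2 * ln 2.

From Stdlib Require Import Reals Lra Ranalysis5 ClassicalEpsilon.
From Coquelicot Require Import Coquelicot.
Open Scope R_scope.

(* Substitute s = sqrt (1 - 4 lambda) in (0, 1).  Then theta = tau s := artanh s / s - 1 with
   tau' = delta / (s^2 (1 - s^2)), where delta s := s - artanh s (1 - s^2) > 0, so the inverse
   sigma of tau is differentiable with sigma' = s^2 (1 - s^2) / delta.  In the variable s,
   f' = - ln s^2, f'' = - 2 s (1 - s^2) / delta and j = - ln (delta / s) / 2 + ln 2 / 2, so f'''
   and j'' are rational in s, artanh s and delta, and for s >= 1/2 they are bounded by a constant
   times (1 + artanh s) (1 - s^2).  Since exp (2 artanh s) = (1 + s) / (1 - s) and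
   theta <= artanh s, this weight is O(artanh s * exp (- 2 artanh s)) = O(exp (- a theta))
   for every a < 2. *)

Ltac solve_domain := unfold Rdiv, Rminus in *; cbn [pow] in *; repeat split;
  try (apply Rmult_lt_0_compat; [|apply Rinv_0_lt_compat]); nra.

(* auto_derive expands [s ^ 2] into [s * (s * 1)], also under [ln]; once powers are normalised,
   every [ln] term of the goal and of the positivity hypotheses becomes a variable for [field]. *)
Ltac field_ln :=
  repeat match goal with H : context [ln _] |- _ => revert H end;
  unfold Rdiv, Rminus; cbn [pow];
  repeat match goal with |- context [ln ?x] => generalize (ln x); intro end;
  intros; field; solve_domain.

Lemma is_derive_artanh s : -1 < s < 1 -> is_derive artanh s (/ (1 - s ^ 2)).
Proof. intros Hs. unfold artanh. auto_derive; [solve_domain|field; solve_domain]. Qed.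

Lemma artanh_0 : artanh 0 = 0.
Proof. unfold artanh. rewrite Rminus_0_r, Rplus_0_r, Rdiv_1_r, ln_1. ring. Qed.

Lemma exp_2_artanh s : -1 < s < 1 -> exp (2 * artanh s) = (1 + s) / (1 - s).
Proof.
  intros Hs. unfold artanh. replace (2 * (/ 2 * _)) with (ln ((1 + s) / (1 - s))) by field.
  apply exp_ln, Rdiv_lt_0_compat; lra.
Qed.

Lemma incr_of_is_derive_pos (h h' : R -> R) (a b : R) :
  (forall x, a <= x < b -> is_derive h x (h' x)) ->
  (forall x, a < x < b -> 0 < h' x) ->
  forall x y, a <= x -> x < y -> y < b -> h x < h y.
Proof.
  intros Hd Hpos x y Hx Hxy Hy.
  destruct (MVT_cor2 h h' x y Hxy) as [c [Hc Hcxy]].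
  - intros c Hc. apply is_derive_Reals, Hd. lra.
  - assert (0 < h' c * (y - x)) by (apply Rmult_lt_0_compat; [apply Hpos|]; lra). lra.
Qed.

Lemma artanh_gt_id s : 0 < s < 1 -> s < artanh s.
Proof.
  intros Hs.
  enough (Hlt : artanh 0 - 0 < artanh s - s) by (rewrite artanh_0 in Hlt; lra).
  apply (incr_of_is_derive_pos (fun x => artanh x - x) (fun x => x ^ 2 / (1 - x ^ 2)) 0 1); try lra.
  - intros x Hx. replace (x ^ 2 / (1 - x ^ 2)) with (/ (1 - x ^ 2) - 1) by (field; nra).
    apply @is_derive_minus; [apply is_derive_artanh; lra | apply @is_derive_id].
  - intros x Hx. apply Rdiv_lt_0_compat; nra.
Qed.

Definition delta (s : R) : R := s - artanh s * (1 - s ^ 2).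

Definition tau (s : R) : R := -1 + artanh s / s.

Lemma is_derive_delta s : -1 < s < 1 -> is_derive delta s (2 * s * artanh s).
Proof.
  intros Hs. unfold delta, artanh. auto_derive; [solve_domain|field_ln].
Qed.

Lemma is_derive_tau s : 0 < s < 1 -> is_derive tau s (delta s / (s ^ 2 * (1 - s ^ 2))).
Proof.
  intros Hs. unfold tau, delta, artanh. auto_derive; [solve_domain|field_ln].
Qed.

Lemma delta_incr x y : 0 <= x -> x < y -> y < 1 -> delta x < delta y.
Proof.
  apply (incr_of_is_derive_pos delta (fun s => 2 * s * artanh s) 0 1).
  - intros s Hs. apply is_derive_delta. lra.
  - intros s Hs. pose proof (artanh_gt_id s Hs). nra.
Qed.

Lemma delta_pos s : 0 < s < 1 -> 0 < delta s.
Proof.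
  intros Hs. replace 0 with (delta 0) by (unfold delta; rewrite artanh_0; ring).
  apply delta_incr; lra.
Qed.

Lemma tau_incr x y : 0 < x -> x < y -> y < 1 -> tau x < tau y.
Proof.
  intros Hx. apply (incr_of_is_derive_pos tau (fun s => delta s / (s ^ 2 * (1 - s ^ 2))) x 1).
  - intros s Hs. apply is_derive_tau. lra.
  - intros s Hs. apply Rdiv_lt_0_compat; [apply delta_pos; lra|].
    apply Rmult_lt_0_compat; nra.
  - lra.
Qed.

Lemma tau_pos s : 0 < s < 1 -> 0 < tau s.
Proof.
  intros Hs. unfold tau. pose proof (artanh_gt_id s Hs).
  enough (1 < artanh s / s) by lra.
  apply Rlt_div_r; lra.
Qed.

Lemma tau_le_artanh s : 0 < s < 1 -> tau s <= artanh s.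
Proof.
  intros Hs. pose proof (delta_pos s Hs) as Hd. pose proof (artanh_gt_id s Hs).
  unfold delta, tau in *.
  assert (Hsplit : artanh s / s = artanh s + artanh s * (1 - s) / s) by (field; lra).
  assert (artanh s * (1 - s) / s <= 1); [|lra].
  apply Rle_div_l; [lra|].
  assert (0 <= artanh s * (1 - s) * s) by (apply Rmult_le_pos; nra). nra.
Qed.

Lemma tau_continuous s : 0 < s < 1 -> continuity_pt tau s.
Proof.
  intros Hs. apply continuity_pt_filterlim, (@ex_derive_continuous R_AbsRing R_NormedModule).
  eexists. apply is_derive_tau, Hs.
Qed.

(* Any threshold in (0, 1) would do: above it, delta stays bounded away from 0. *)
Definition theta0 : R := tau (1 / 2).

Lemma theta0_pos : 0 < theta0.
Proof. apply tau_pos. lra. Qed.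

Lemma tau_surj t : theta0 <= t -> exists s, 1 / 2 <= s < 1 /\ tau s = t.
Proof.
  intros Ht. destruct (Req_dec t theta0) as [->|Hne]; [exists (1 / 2); split; [lra|easy]|].
  pose proof theta0_pos.
  set (e := exp (2 * t + 2)).
  assert (He : 2 < e) by (pose proof (exp_ineq1_le (2 * t + 2)); unfold e; lra).
  set (s1 := 1 - / e).
  assert (Hs1 : 1 / 2 < s1 < 1).
  { assert (0 < / e < / 2) by (split; [apply Rinv_0_lt_compat | apply Rinv_lt_contravar]; lra).
    unfold s1; lra. }
  assert (Hts1 : t < tau s1).
  { assert (Hexp : e < exp (2 * artanh s1)).
    { rewrite exp_2_artanh by lra. unfold s1.
      replace ((1 + (1 - / e)) / (1 - (1 - / e))) with (2 * e - 1) by (field; lra). lra. }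
    apply exp_lt_inv in Hexp. pose proof (artanh_gt_id s1 ltac:(lra)).
    assert (artanh s1 <= artanh s1 / s1) by (apply (Rle_div_r (artanh s1)); nra).
    unfold tau. lra. }
  destruct (IVT_interv (fun s => tau s - t) (1 / 2) s1) as [s [Hs Hst]].
  - intros x Hx.
    apply continuity_pt_minus; [apply tau_continuous; lra | apply continuity_pt_const; easy].
  - lra.
  - fold theta0. lra.
  - lra.
  - exists s. split; lra.
Qed.

Lemma lambda_spec t : theta0 <= t -> 0 < lambda t < / 4 /\ theta_of_lambda (lambda t) = t.
Proof.
  intros Ht. pose proof theta0_pos. unfold lambda.
  destruct (Rle_dec t 0) as [|_]; [lra|]. apply epsilon_spec.
  destruct (tau_surj t Ht) as [s [Hs Hst]].
  exists ((1 - s ^ 2) / 4). split; [split; nra|].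
  unfold theta_of_lambda. replace (1 - 4 * ((1 - s ^ 2) / 4)) with (s ^ 2) by field.
  rewrite sqrt_pow2 by lra. exact Hst.
Qed.

Definition sigma (t : R) : R := sqrt (1 - 4 * lambda t).

Lemma sigma_spec t : theta0 <= t ->
  1 / 2 <= sigma t < 1 /\ tau (sigma t) = t /\ lambda t = (1 - sigma t ^ 2) / 4.
Proof.
  intros Ht. destruct (lambda_spec t Ht) as [Hl Htau].
  assert (Hsq : sigma t ^ 2 = 1 - 4 * lambda t) by (apply pow2_sqrt; lra).
  assert (Hs : 0 < sigma t < 1).
  { split; [apply sqrt_lt_R0; lra|]. rewrite <- sqrt_1. apply sqrt_lt_1_alt. lra. }
  split; [|split; [exact Htau | lra]].
  split; [|apply Hs].
  destruct (Rlt_le_dec (sigma t) (1 / 2)) as [Hlt|]; [|assumption].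
  pose proof (tau_incr (sigma t) (1 / 2) (proj1 Hs) Hlt ltac:(lra)) as Hlt'.
  change (tau (sigma t) = t) in Htau. fold theta0 in Hlt'. lra.
Qed.

Lemma sigma_le x y : theta0 <= x -> x <= y -> sigma x <= sigma y.
Proof.
  intros Hx Hxy.
  destruct (sigma_spec x Hx) as [Hsx [Htx _]], (sigma_spec y ltac:(lra)) as [Hsy [Hty _]].
  destruct (Rle_lt_dec (sigma x) (sigma y)) as [|Hlt]; [assumption|].
  pose proof (tau_incr (sigma y) (sigma x) ltac:(lra) Hlt ltac:(lra)). lra.
Qed.

Lemma is_derive_inverse (f f' g : R -> R) (lb ub x : R) :
  lb < x < ub ->
  (forall y, lb <= y <= ub -> f (g y) = y) ->
  (forall y z, lb <= y -> y <= z -> z <= ub -> g y <= g z) ->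
  (forall u, g lb <= u <= g ub -> is_derive f u (f' u)) ->
  (forall u v, g lb <= u -> u < v -> v <= g ub -> f u < f v) ->
  f' (g x) <> 0 ->
  is_derive g x (/ f' (g x)).
Proof.
  intros Hx Hfg Hg Hf Hincr Hnz.
  pose (Prf a Ha :=
    exist (fun l => derivable_pt_lim f a l) (f' a) (proj1 (is_derive_Reals _ _ _) (Hf a Ha))).
  assert (Hgx : g lb <= g x <= g ub) by (split; apply Hg; lra).
  assert (Hglu : g lb < g ub).
  { destruct (Req_dec (g lb) (g ub)) as [Heq|]; [|lra].
    pose proof (Hfg lb ltac:(lra)). pose proof (Hfg ub ltac:(lra)). rewrite Heq in *. lra. }
  assert (Hcont : continuity_pt g x).
  { apply (continuity_pt_recip_interv f g (g lb) (g ub) Hglu); unfold comp, id.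
    - intros u v Hu Huv Hv. apply Hincr; lra.
    - intros y. rewrite !Hfg by lra. intros; apply Hfg; lra.
    - intros y. rewrite !Hfg by lra. intros; split; apply Hg; lra.
    - intros a Ha. apply continuity_pt_filterlim, (@ex_derive_continuous R_AbsRing R_NormedModule).
      exists (f' a). apply Hf, Ha.
    - rewrite !Hfg by lra. exact Hx. }
  apply is_derive_Reals.
  pose proof (derivable_pt_lim_recip_interv f g lb ub x Prf Hcont ltac:(lra) Hx Hgx) as Hd.
  replace (/ f' (g x)) with (1 / derive_pt f (g x) (Prf (g x) Hgx)).
  - apply Hd; [intros y Hy; apply Hfg, Hy | exact Hnz].
  - simpl. field. exact Hnz.
Qed.

Definition dsigma (s : R) : R := s ^ 2 * (1 - s ^ 2) / delta s.

Lemma dsigma_pos s : 0 < s < 1 -> 0 < dsigma s.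
Proof.
  intros Hs. apply Rdiv_lt_0_compat; [apply Rmult_lt_0_compat; nra | apply delta_pos, Hs].
Qed.

Lemma is_derive_sigma t : theta0 < t -> is_derive sigma t (dsigma (sigma t)).
Proof.
  intros Ht. destruct (sigma_spec t ltac:(lra)) as [Hs _].
  assert (Hd : 0 < delta (sigma t)) by (apply delta_pos; lra).
  replace (dsigma (sigma t)) with (/ (delta (sigma t) / (sigma t ^ 2 * (1 - sigma t ^ 2)))).
  2: { unfold dsigma. field. split; [lra|]. split; nra. }
  apply (is_derive_inverse tau (fun s => delta s / (s ^ 2 * (1 - s ^ 2))) sigma theta0 (t + 1)).
  - lra.
  - intros y Hy. apply sigma_spec, Hy.
  - intros y z Hy Hyz _. apply sigma_le; assumption.
  - intros u Hu. destruct (sigma_spec theta0 (Rle_refl _)) as [H0 _].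
    destruct (sigma_spec (t + 1) ltac:(lra)) as [H1 _]. apply is_derive_tau. lra.
  - intros u v Hu Huv Hv. destruct (sigma_spec theta0 (Rle_refl _)) as [H0 _].
    destruct (sigma_spec (t + 1) ltac:(lra)) as [H1 _]. apply tau_incr; lra.
  - apply Rgt_not_eq, Rdiv_lt_0_compat; [lra | apply Rmult_lt_0_compat; nra].
Qed.

Lemma Derive_n_S_comp_sigma (g H K : R -> R) (n : nat) (t : R) :
  theta0 < t ->
  (forall u, theta0 < u -> Derive_n g n u = H (sigma u)) ->
  (forall s, 1 / 2 <= s < 1 -> is_derive H s (K s / dsigma s)) ->
  ex_derive_n g (S n) t /\ Derive_n g (S n) t = K (sigma t).
Proof.
  intros Ht Hg HH.
  assert (Hloc : locally t (fun u => H (sigma u) = Derive_n g n u)).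
  { apply (locally_interval _ t theta0 p_infty); [exact Ht | easy |].
    intros u Hu _. symmetry. apply Hg, Hu. }
  assert (HD : is_derive (fun u => H (sigma u)) t (K (sigma t))).
  { destruct (sigma_spec t ltac:(lra)) as [Hs _].
    pose proof (dsigma_pos (sigma t) ltac:(lra)).
    replace (K (sigma t)) with (dsigma (sigma t) * (K (sigma t) / dsigma (sigma t)))
      by (field; lra).
    apply (is_derive_comp H sigma); [apply HH, Hs | apply is_derive_sigma, Ht]. }
  split.
  - apply (ex_derive_ext_loc _ _ t Hloc). eexists. exact HD.
  - simpl. rewrite <- (Derive_ext_loc _ _ t Hloc). apply is_derive_unique, HD.
Qed.

Definition f_s (s : R) : R := - ln ((1 - s ^ 2) / 4) - 2 * tau s - tau s * ln (s ^ 2).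

Definition d2f_s (s : R) : R := - 2 * s * (1 - s ^ 2) / delta s.

Definition d3f_s (s : R) : R :=
  - 2 * ((1 - 3 * s ^ 2) * delta s - 2 * s ^ 2 * (artanh s * (1 - s ^ 2)))
  * (s ^ 2 * (1 - s ^ 2)) / delta s ^ 3.

Lemma f_fun_eq t : theta0 <= t -> f_fun t = f_s (sigma t).
Proof.
  intros Ht. destruct (sigma_spec t Ht) as [_ [Htau Hl]].
  unfold f_fun. rewrite Hl. set (s := sigma t) in *. clearbody s. subst t.
  unfold f_s. replace (1 - 4 * ((1 - s ^ 2) / 4)) with (s ^ 2) by field. reflexivity.
Qed.

Lemma is_derive_f_s s : 1 / 2 <= s < 1 -> is_derive f_s s (- ln (s ^ 2) / dsigma s).
Proof.
  intros Hs. pose proof (delta_pos s ltac:(lra)) as Hd.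
  unfold f_s, dsigma, tau, delta, artanh in *.
  auto_derive; [solve_domain|field_ln].
Qed.

Lemma is_derive_neg_ln_sq s :
  1 / 2 <= s < 1 -> is_derive (fun s => - ln (s ^ 2)) s (d2f_s s / dsigma s).
Proof.
  intros Hs. pose proof (delta_pos s ltac:(lra)) as Hd.
  unfold d2f_s, dsigma, delta, artanh in *.
  auto_derive; [solve_domain|field_ln].
Qed.

Lemma is_derive_d2f_s s : 1 / 2 <= s < 1 -> is_derive d2f_s s (d3f_s s / dsigma s).
Proof.
  intros Hs. pose proof (delta_pos s ltac:(lra)) as Hd.
  unfold d2f_s, d3f_s, dsigma, delta, artanh in *.
  auto_derive; [solve_domain|field_ln].
Qed.

Definition j_s (s : R) : R := - / 2 * ln (delta s / s) + / 2 * ln 2.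

Definition dj_s (s : R) : R :=
  - s * (1 - s ^ 2) * (2 * artanh s * s ^ 2 - delta s) / (2 * delta s ^ 2).

Definition d2j_s (s : R) : R :=
  - (((1 - 3 * s ^ 2) * (2 * artanh s * s ^ 2 - delta s) + 2 * s ^ 3
       + 2 * s ^ 2 * (artanh s * (1 - s ^ 2))) * delta s
     - 4 * s ^ 2 * (artanh s * (1 - s ^ 2)) * (2 * artanh s * s ^ 2 - delta s)) / 2
  * (s ^ 2 * (1 - s ^ 2)) / delta s ^ 4.

Lemma j_fun_eq t : theta0 <= t -> j_fun t = j_s (sigma t).
Proof.
  intros Ht. destruct (sigma_spec t Ht) as [Hs [Htau Hl]].
  unfold j_fun. rewrite Hl. set (s := sigma t) in *. clearbody s. subst t.
  unfold j_s, delta, tau. do 3 f_equal. field. lra.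
Qed.

Lemma is_derive_j_s s : 1 / 2 <= s < 1 -> is_derive j_s s (dj_s s / dsigma s).
Proof.
  intros Hs. pose proof (delta_pos s ltac:(lra)) as Hd.
  assert (Hds : 0 < delta s / s) by (apply Rdiv_lt_0_compat; lra).
  unfold j_s, dj_s, dsigma, delta, artanh in *.
  auto_derive; [solve_domain|field_ln].
Qed.

Lemma is_derive_dj_s s : 1 / 2 <= s < 1 -> is_derive dj_s s (d2j_s s / dsigma s).
Proof.
  intros Hs. pose proof (delta_pos s ltac:(lra)) as Hd.
  unfold dj_s, d2j_s, dsigma, delta, artanh in *.
  auto_derive; [solve_domain|field_ln].
Qed.

Lemma Derive_3_f_fun t :
  theta0 < t -> ex_derive_n f_fun 3 t /\ Derive_n f_fun 3 t = d3f_s (sigma t).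
Proof.
  intros Ht.
  assert (D1 : forall u, theta0 < u -> Derive_n f_fun 1 u = - ln (sigma u ^ 2)).
  { intros u Hu. apply (Derive_n_S_comp_sigma f_fun f_s (fun s => - ln (s ^ 2))); [exact Hu | |].
    - intros v Hv. apply f_fun_eq. lra.
    - apply is_derive_f_s. }
  assert (D2 : forall u, theta0 < u -> Derive_n f_fun 2 u = d2f_s (sigma u)).
  { intros u Hu.
    apply (Derive_n_S_comp_sigma f_fun _ d2f_s 1 u Hu D1 is_derive_neg_ln_sq). }
  exact (Derive_n_S_comp_sigma f_fun d2f_s d3f_s 2 t Ht D2 is_derive_d2f_s).
Qed.

Lemma Derive_2_j_fun t :
  theta0 < t -> ex_derive_n j_fun 2 t /\ Derive_n j_fun 2 t = d2j_s (sigma t).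
Proof.
  intros Ht.
  assert (D1 : forall u, theta0 < u -> Derive_n j_fun 1 u = dj_s (sigma u)).
  { intros u Hu. apply (Derive_n_S_comp_sigma j_fun j_s dj_s 0 u Hu); [|apply is_derive_j_s].
    intros v Hv. apply j_fun_eq. lra. }
  exact (Derive_n_S_comp_sigma j_fun dj_s d2j_s 1 t Ht D1 is_derive_dj_s).
Qed.

Lemma Rabs_div_pow_le (y w d d0 c : R) (n : nat) :
  Rabs y <= c -> 0 <= w -> 0 < d0 <= d -> Rabs (y * w / d ^ n) <= c / d0 ^ n * w.
Proof.
  intros Hy Hw Hd.
  assert (Hdn : 0 < d0 ^ n <= d ^ n) by (split; [apply pow_lt | apply pow_incr]; lra).
  unfold Rdiv. rewrite !Rabs_mult, (Rabs_pos_eq w Hw), Rabs_inv, (Rabs_pos_eq (d ^ n)) by lra.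
  rewrite Rmult_assoc, (Rmult_comm w), <- Rmult_assoc.
  apply Rmult_le_compat_r; [exact Hw|].
  apply Rmult_le_compat; [apply Rabs_pos | left; apply Rinv_0_lt_compat; lra | exact Hy |].
  apply Rinv_le_contravar; lra.
Qed.

Lemma artanh_mul_one_sub_sq_bounds s : 0 < s < 1 -> 0 <= artanh s * (1 - s ^ 2) <= 1.
Proof.
  intros Hs. pose proof (artanh_gt_id s Hs). pose proof (delta_pos s Hs). unfold delta in *.
  split; [apply Rmult_le_pos|]; nra.
Qed.

Lemma delta_bounds s : 1 / 2 <= s < 1 -> 0 < delta (1 / 2) <= delta s /\ delta s <= 1.
Proof.
  intros Hs. split; [split|].
  - apply delta_pos. lra.
  - destruct (Req_dec s (1 / 2)) as [->|]; [lra|]. left. apply delta_incr; lra.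
  - pose proof (artanh_mul_one_sub_sq_bounds s ltac:(lra)). unfold delta. lra.
Qed.

Definition decay_weight (s : R) : R := (1 + artanh s) * (1 - s ^ 2).

Lemma d3f_s_bound s : 1 / 2 <= s < 1 -> Rabs (d3f_s s) <= 8 / delta (1 / 2) ^ 3 * decay_weight s.
Proof.
  intros Hs. pose proof (artanh_gt_id s ltac:(lra)).
  pose proof (artanh_mul_one_sub_sq_bounds s ltac:(lra)).
  destruct (delta_bounds s Hs) as [Hd0 Hd1].
  apply Rle_trans with (8 / delta (1 / 2) ^ 3 * (s ^ 2 * (1 - s ^ 2))).
  - apply Rabs_div_pow_le; [| apply Rmult_le_pos; nra | exact Hd0].
    apply Rabs_le_between.
    assert (0 <= s ^ 2 <= 1) by (split; nra).
    set (p := artanh s * (1 - s ^ 2)) in *. set (r := s ^ 2) in *. split; nra.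
  - apply Rmult_le_compat_l.
    + apply Rdiv_le_0_compat; [lra | apply pow_lt; lra].
    + unfold decay_weight. apply Rmult_le_compat_r; nra.
Qed.

Lemma d2j_s_bound s : 1 / 2 <= s < 1 -> Rabs (d2j_s s) <= 6 / delta (1 / 2) ^ 4 * decay_weight s.
Proof.
  intros Hs. pose proof (artanh_gt_id s ltac:(lra)).
  pose proof (artanh_mul_one_sub_sq_bounds s ltac:(lra)).
  destruct (delta_bounds s Hs) as [Hd0 Hd1].
  apply Rle_trans with (6 * (1 + artanh s) / delta (1 / 2) ^ 4 * (s ^ 2 * (1 - s ^ 2))).
  - apply Rabs_div_pow_le; [| apply Rmult_le_pos; nra | exact Hd0].
    assert (0 <= s ^ 2 <= 1) by (split; nra).
    assert (0 <= s ^ 3 <= 1) by (split; nra).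
    assert (-1 <= 2 * artanh s * s ^ 2 - delta s <= 2 * artanh s) by (split; nra).
    set (p := artanh s * (1 - s ^ 2)) in *. set (q := 2 * artanh s * s ^ 2 - delta s) in *.
    set (r := s ^ 2) in *. set (A := artanh s) in *. set (d := delta s) in *.
    assert (HW : - (6 + 4 * A) <= (1 - 3 * r) * q + 2 * s ^ 3 + 2 * r * p <= 6 + 4 * A)
      by (split; nra).
    assert (HWd : - (6 + 4 * A) <= ((1 - 3 * r) * q + 2 * s ^ 3 + 2 * r * p) * d <= 6 + 4 * A)
      by (split; nra).
    assert (0 <= r * p <= 1) by (split; nra).
    assert (- (4 + 8 * A) <= 4 * r * p * q <= 4 + 8 * A) by (split; nra).
    apply Rabs_le_between. lra.
  - unfold decay_weight.
    replace (6 * (1 + artanh s) / delta (1 / 2) ^ 4 * (s ^ 2 * (1 - s ^ 2)))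
      with (6 / delta (1 / 2) ^ 4 * ((1 + artanh s) * (s ^ 2 * (1 - s ^ 2))))
      by (unfold Rdiv; ring).
    apply Rmult_le_compat_l; [apply Rdiv_le_0_compat; [lra | apply pow_lt; lra]|].
    apply Rmult_le_compat_l; [lra|]. assert (0 <= s ^ 2 <= 1) by (split; nra). nra.
Qed.

Lemma one_add_le_exp b x : 0 < b -> 0 <= x -> 1 + x <= (1 + / b) * exp (b * x).
Proof.
  intros Hb Hx. pose proof (exp_ineq1_le (b * x)).
  assert (Hib : 0 < / b) by (apply Rinv_0_lt_compat, Hb).
  apply Rle_trans with ((1 + / b) * (1 + b * x)).
  - replace ((1 + / b) * (1 + b * x)) with (1 + x + / b + b * x) by (field; lra).
    assert (0 <= b * x) by (apply Rmult_le_pos; lra). lra.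
  - apply Rmult_le_compat_l; lra.
Qed.

Lemma decay_weight_le a s : 0 < a < 2 -> 0 < s < 1 ->
  decay_weight s <= 4 * (1 + / (2 - a)) * exp (- a * tau s).
Proof.
  intros Ha Hs. unfold decay_weight.
  pose proof (artanh_gt_id s Hs). pose proof (tau_le_artanh s Hs).
  assert (Hsq : 1 - s ^ 2 = (1 + s) ^ 2 * exp (- (2 * artanh s))).
  { rewrite exp_Ropp, exp_2_artanh by lra. field. lra. }
  assert (Hexp : exp ((2 - a) * artanh s) * exp (- (2 * artanh s)) <= exp (- a * tau s)).
  { rewrite <- exp_plus.
    assert (Hle : (2 - a) * artanh s + - (2 * artanh s) <= - a * tau s) by nra.
    destruct (Rle_lt_or_eq_dec _ _ Hle) as [Hlt|Heq].
    - left. apply exp_increasing, Hlt.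
    - right. rewrite Heq. reflexivity. }
  pose proof (one_add_le_exp (2 - a) (artanh s) ltac:(lra) ltac:(lra)).
  assert (0 < / (2 - a)) by (apply Rinv_0_lt_compat; lra).
  assert (0 < exp (- (2 * artanh s))) by apply exp_pos.
  rewrite Hsq.
  apply Rle_trans with ((1 + / (2 - a)) * exp ((2 - a) * artanh s) * (4 * exp (- (2 * artanh s)))).
  - apply Rmult_le_compat; [lra | | assumption |].
    + apply Rmult_le_pos; [nra | lra].
    + apply Rmult_le_compat_r; [lra | nra].
  - replace ((1 + / (2 - a)) * exp ((2 - a) * artanh s) * (4 * exp (- (2 * artanh s))))
      with (4 * (1 + / (2 - a)) * (exp ((2 - a) * artanh s) * exp (- (2 * artanh s)))) by ring.
    apply Rmult_le_compat_l; [lra | exact Hexp].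
Qed.

Theorem proposition6 :
  forall a : R, 0 < a < 2 ->
    (exists C M : R, forall t : R, M < t ->
        ex_derive_n f_fun 3 t /\ Rabs (Derive_n f_fun 3 t) <= C * exp (- a * t)) /\
    (exists C M : R, forall t : R, M < t ->
        ex_derive_n j_fun 2 t /\ Rabs (Derive_n j_fun 2 t) <= C * exp (- a * t)).
Proof.
  intros a Ha.
  set (K := 4 * (1 + / (2 - a))).
  assert (Hweight : forall t, theta0 < t -> decay_weight (sigma t) <= K * exp (- a * t)).
  { intros t Ht. destruct (sigma_spec t ltac:(lra)) as [Hs [Htau _]].
    pose proof (decay_weight_le a (sigma t) Ha ltac:(lra)) as Hle. rewrite Htau in Hle. exact Hle. }
  assert (Hc : forall n, 0 <= / delta (1 / 2) ^ n).
  { intros n. left. apply Rinv_0_lt_compat, pow_lt, delta_pos. lra. }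
  split.
  - exists (8 / delta (1 / 2) ^ 3 * K), theta0. intros t Ht.
    destruct (Derive_3_f_fun t Ht) as [Hex ->]. split; [exact Hex|].
    destruct (sigma_spec t ltac:(lra)) as [Hs _].
    eapply Rle_trans; [apply d3f_s_bound, Hs|]. rewrite Rmult_assoc.
    apply Rmult_le_compat_l; [apply Rmult_le_pos; [lra | apply Hc] | apply Hweight, Ht].
  - exists (6 / delta (1 / 2) ^ 4 * K), theta0. intros t Ht.
    destruct (Derive_2_j_fun t Ht) as [Hex ->]. split; [exact Hex|].
    destruct (sigma_spec t ltac:(lra)) as [Hs _].
    eapply Rle_trans; [apply d2j_s_bound, Hs|]. rewrite Rmult_assoc.
    apply Rmult_le_compat_l; [apply Rmult_le_pos; [lra | apply Hc] | apply Hweight, Ht].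
Qed.
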